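(* Let $\mathcal{A}$ be a finite set and $n\ge1$. Let $0<w_1\le w_2\le\dots\le w_n$, let $\eta_1,\dots,\eta_n>0$, let $a_1,\dots,a_n\in\mathcal{A}$, let $\hat\ell_1,\dots,\hat\ell_n:\mathcal{A}\to[0,\infty)$, and for each $i\in[n]$ let $\mathcal{M}_i\subseteq[i-1]$. Define $$\hat L_i(a)=\sum_{j\in[i-1]\setminus\mathcal{M}_i}w_j\hat\ell_j(a),\qquad \tilde L_{i+1}(a)=\sum_{j\in[i]}w_j\hat\ell_j(a),$$ and the distributions $\hat\pi_i(a)\propto\exp\big(-(\eta_i/w_i)\hat L_i(a)\big)$, $\tilde\pi_{i+1}(a)\propto\exp\big(-(\eta_i/w_i)\tilde L_{i+1}(a)\big)$ on $\mathcal{A}$. Assume $\hat\ell_i(a_i)\hat\pi_i(a_i)\le1$ for all $i\in[n]$. Then $$\sum_{i=1}^n w_i\,\hat\ell_i(a_i)\big[\hat\pi_i(a_i)-\tilde\pi_{i+1}(a_i)\big]\le\sum_{j=1}^n\sum_{a\in\mathcal{A}}\hat\ell_j(a)\Big(\eta_jw_j+\sum_{i\in[n]:\,j\in\mathcal{M}_i}\eta_iw_i\,\mathbb{I}\{a_i=a\}\Big).$$ *)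

From HB Require Import structures.
From mathcomp Require Import all_boot all_order all_algebra.
From mathcomp Require Import all_classical all_reals.
From mathcomp Require Import all_analysis.
Set Implicit Arguments. Unset Strict Implicit. Unset Printing Implicit Defensive.
Import Order.TTheory GRing.Theory Num.Theory.
Local Open Scope ring_scope.

Definition gibbs (R : realType) (A : finType) (c : R) (L : A -> R) (a : A) : R :=
  expR (- (c * L a)) / \sum_(b : A) expR (- (c * L b)).

(* Indices i in [n] are represented 0-based by 'I_n; [i-1] = {j | j < i}.
   hatL i a = sum_{j < i, j notin M i} w_j * lhat_j(a) *)
Definition hatL (R : realType) (A : finType) (n : nat) (w : 'I_n -> R)
  (lhat : 'I_n -> A -> R) (M : 'I_n -> {set 'I_n}) (i : 'I_n) (a : A) : R :=
  \sum_(j : 'I_n | (j < i)%N && (j \notin M i)) w j * lhat j a.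

Definition tildeL_succ (R : realType) (A : finType) (n : nat) (w : 'I_n -> R)
  (lhat : 'I_n -> A -> R) (i : 'I_n) (a : A) : R :=
  \sum_(j : 'I_n | (j <= i)%N) w j * lhat j a.

Definition hatpi (R : realType) (A : finType) (n : nat) (w eta : 'I_n -> R)
  (lhat : 'I_n -> A -> R) (M : 'I_n -> {set 'I_n}) (i : 'I_n) : A -> R :=
  gibbs (eta i / w i) (hatL w lhat M i).

Definition tildepi_succ (R : realType) (A : finType) (n : nat) (w eta : 'I_n -> R)
  (lhat : 'I_n -> A -> R) (i : 'I_n) : A -> R :=
  gibbs (eta i / w i) (tildeL_succ w lhat i).

(* Each round is controlled by the first-order bound 1 - d <= exp(-d): since
   the normaliser only shrinks, raising the cumulative loss by d >= 0 lowers
   a Gibbs probability p by at most p * c * d.  Between hatpi_i and tildepi_(i+1) the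
   loss grows by the missed losses of M_i and by the current loss w_i lhat_i;
   with lhat_i(a_i) hatpi_i(a_i) <= 1 the round is charged
   eta_i w_i lhat_i(a_i) + eta_i sum_(j in M_i) w_j lhat_j(a_i), and w_j <= w_i
   turns the second term into the missed-feedback part of the right-hand side
   after exchanging the order of summation. *)

From HB Require Import structures.
From mathcomp Require Import all_boot all_order all_algebra all_classical all_reals all_analysis.
From mathcomp Require Import ring.
Set Implicit Arguments. Unset Strict Implicit. Unset Printing Implicit Defensive.
Import Order.TTheory GRing.Theory Num.Theory.
Local Open Scope ring_scope.

Lemma gibbs_sub_le (R : realType) (A : finType) (c : R) (L L' : A -> R) (a : A) :
  0 <= c -> (forall b, L b <= L' b) ->
  gibbs c L a - gibbs c L' a <= gibbs c L a * (c * (L' a - L a)).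
Proof.
move=> c_ge0 leLL'; rewrite /gibbs.
set Z := \sum_b _; set Z' := \sum_b _.
have Z'_gt0 : 0 < Z'.
  rewrite /Z' (bigD1 a) //= ltr_pwDl ?expR_gt0 //.
  by apply: sumr_ge0 => b _; exact: expR_ge0.
have leZ'Z : Z' <= Z by apply: ler_sum => b _; rewrite ler_expR lerN2 ler_wpM2l.
have Z_gt0 : 0 < Z by apply: lt_le_trans leZ'Z.
have -> : expR (- (c * L' a)) = expR (- (c * L a)) * expR (- (c * (L' a - L a))).
  by rewrite -expRD; congr expR; ring.
set E := expR (- (c * L a)); set d := c * (L' a - L a).
have -> : E / Z * d = E / Z - E * (1 - d) / Z by field; rewrite gt_eqF.
rewrite lerD2l lerN2 (@le_trans _ _ (E * expR (- d) / Z)) //.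
  by rewrite ler_pM2r ?invr_gt0 // ler_pM2l ?expR_gt0 // expR_ge1Dx.
by rewrite ler_pM2l ?mulr_gt0 ?expR_gt0 // lef_pV2 ?posrE.
Qed.

Section Rounds.

Variables (R : realType) (A : finType) (n : nat).
Variables (w eta : 'I_n -> R) (lhat : 'I_n -> A -> R) (M : 'I_n -> {set 'I_n}).
Hypothesis w_gt0 : forall i, 0 < w i.
Hypothesis eta_gt0 : forall i, 0 < eta i.
Hypothesis lhat_ge0 : forall i a, 0 <= lhat i a.
Hypothesis M_lt : forall i, M i \subset [set j : 'I_n | (j < i)%N].

Definition missedL (i : 'I_n) (a : A) : R := \sum_(j in M i) w j * lhat j a.

Lemma missedL_ge0 i a : 0 <= missedL i a.
Proof. by apply: sumr_ge0 => j _; rewrite mulr_ge0 // ltW. Qed.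

Lemma tildeL_succE i a :
  tildeL_succ w lhat i a = hatL w lhat M i a + missedL i a + w i * lhat i a.
Proof.
rewrite /tildeL_succ /hatL /missedL (bigD1 i) //= addrC; congr (_ + _).
rewrite (bigID (fun j => j \in M i)) /= addrC; congr (_ + _).
  apply: eq_bigl => j; rewrite -val_eqE /= [(j < i)%N]ltn_neqAle.
  by case: (j \in M i); case: (nat_of_ord j == i); case: (j <= i)%N.
apply: eq_bigl => j; apply/andP/idP => [[] // | jM].
have := fintype.subsetP (M_lt i) j jM; rewrite inE => lt_ji.
by rewrite jM (ltnW lt_ji) -val_eqE /= (ltn_eqF lt_ji).
Qed.

Lemma hatL_le_tildeL_succ i a : hatL w lhat M i a <= tildeL_succ w lhat i a.
Proof.
by rewrite tildeL_succE -addrA lerDl addr_ge0 ?missedL_ge0 // mulr_ge0 // ltW.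
Qed.

Lemma round_le i a : lhat i a * hatpi w eta lhat M i a <= 1 ->
  w i * lhat i a * (hatpi w eta lhat M i a - tildepi_succ w eta lhat i a)
  <= eta i * w i * lhat i a + eta i * missedL i a.
Proof.
move=> hbound; set p := hatpi w eta lhat M i a.
have c_ge0 : 0 <= eta i / w i by rewrite divr_ge0 // ltW.
have := gibbs_sub_le a c_ge0 (hatL_le_tildeL_succ i).
rewrite -/(hatpi w eta lhat M i) -/(tildepi_succ w eta lhat i) -/p tildeL_succE.
have wl_ge0 : 0 <= w i * lhat i a by rewrite mulr_ge0 // ltW.
move=> /(ler_wpM2l wl_ge0) /le_trans; apply.
have -> : w i * lhat i a * (p * (eta i / w i * (hatL w lhat M i a + missedL i a
      + w i * lhat i a - hatL w lhat M i a)))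
    = lhat i a * p * (eta i * w i * lhat i a + eta i * missedL i a).
  by field; rewrite gt_eqF.
rewrite -[leRHS]mul1r ler_wpM2r // addr_ge0 ?mulr_ge0 ?missedL_ge0 // ltW //.
Qed.

Lemma missedL_le_current_weight (i : 'I_n) (a : A) :
  (forall j : 'I_n, (j <= i)%N -> w j <= w i) ->
  eta i * missedL i a <= \sum_(j in M i) eta i * w i * lhat j a.
Proof.
move=> w_mono; rewrite mulr_sumr; apply: ler_sum => j jM.
rewrite -!mulrA ler_wpM2l ?(ltW (eta_gt0 i)) // ler_wpM2r // w_mono //.
by have := fintype.subsetP (M_lt i) j jM; rewrite inE => /ltnW.
Qed.

End Rounds.

Lemma sum_missed_indicatorE (R : realType) (A : finType) (n : nat)
    (c : 'I_n -> R) (act : 'I_n -> A) (lhat : 'I_n -> A -> R)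
    (M : 'I_n -> {set 'I_n}) (j : 'I_n) :
  \sum_(a : A) lhat j a * \sum_(i | j \in M i) c i * (act i == a)%:R
  = \sum_(i | j \in M i) c i * lhat j (act i).
Proof.
under eq_bigr do rewrite mulr_sumr.
rewrite exchange_big /=; apply: eq_bigr => i _.
rewrite (bigD1 (act i)) //= eqxx mulr1 big1 ?addr0 1?mulrC // => b.
by rewrite eq_sym => /negbTE ->; rewrite !mulr0.
Qed.

Theorem mainTheorem4 (R : realType) (A : finType) (n : nat)
  (w eta : 'I_n -> R) (act : 'I_n -> A) (lhat : 'I_n -> A -> R)
  (M : 'I_n -> {set 'I_n})
  (hn : (0 < n)%N)
  (hw_pos : forall i : 'I_n, 0 < w i)
  (hw_mono : forall i j : 'I_n, (i <= j)%N -> w i <= w j)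
  (heta : forall i : 'I_n, 0 < eta i)
  (hl : forall (i : 'I_n) (a : A), 0 <= lhat i a)
  (hM : forall i : 'I_n, M i \subset [set j : 'I_n | (j < i)%N])
  (hbound : forall i : 'I_n,
     lhat i (act i) * hatpi w eta lhat M i (act i) <= 1) :
  \sum_(i : 'I_n) w i * lhat i (act i)
      * (hatpi w eta lhat M i (act i) - tildepi_succ w eta lhat i (act i))
  <= \sum_(j : 'I_n) \sum_(a : A) lhat j a *
       (eta j * w j + \sum_(i : 'I_n | j \in M i) eta i * w i * (act i == a)%:R).
Proof.
apply: le_trans (_ : \sum_i (eta i * w i * lhat i (act i)
    + eta i * missedL w lhat M i (act i)) <= _).
  by apply: ler_sum => i _; apply: round_le.
under [leRHS]eq_bigr do
  rewrite (eq_bigr _ (fun a _ => mulrDr _ _ _)) big_split /= sum_missed_indicatorE.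
rewrite big_split /= big_split /= lerD //.
  apply: ler_sum => j _; rewrite (bigD1 (act j)) //= mulrC lerDl.
  by apply: sumr_ge0 => a _; rewrite mulr_ge0 // mulr_ge0 // ltW.
rewrite (exchange_big_dep (fun i : 'I_n => true)) //=.
apply: ler_sum => i _; apply: missedL_le_current_weight => // j; exact: hw_mono.
Qed.
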